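(* Suppose A1–A4 hold and let $\{x_k\}$ be generated by Algorithm 1. Let $\epsilon>0$ and let $T_0(\epsilon)$ be a nonnegative integer such that $\frac{1}{T}\sum_{k=0}^{T-1}\nu_k\le \frac{\kappa_c\epsilon^2}{2}$ for every integer $T\ge T_0(\epsilon)$ (such an integer exists by A4). If $T$ is a positive integer with $$T\ge\max\left\{T_0(\epsilon),\ \frac{2(f(x_0)-f_{low})}{\kappa_c\epsilon^2}\right\},$$ then $\min_{k=0,\dots,T-1}\|\nabla f(x_k)\|\le\epsilon$.
   Context: Let $(X,\langle\cdot,\cdot\rangle)$ be a real Hilbert space with induced norm $\|\cdot\|$, and $f:X\to\mathbb{R}$ Fréchet differentiable with gradient $\nabla f$. Algorithm 1 (general non-monotone descent algorithm): parameters $x_0\in X$, $\alpha_0>0$, $\beta,\rho\in(0,1)$. For $k=0,1,2,\dots$: choose $d_k\in X$ with $\langle\nabla f(x_k),d_k\rangle<0$; then for $l=0,1,2,\dots$ choose a number $\nu_{k,l}\ge 0$ and test $$f(x_k+\alpha_k\beta^l d_k)\le f(x_k)+\rho\alpha_k\beta^l\langle\nabla f(x_k),d_k\rangle+\nu_{k,l};$$ let $l_k$ be the first $l$ for which this holds, set $\nu_k:=\nu_{k,l_k}$, $x_{k+1}=x_k+\alpha_k\beta^{l_k}d_k$ and $\alpha_{k+1}=\alpha_k\beta^{l_k-1}$. It is assumed the algorithm generates infinite sequences (all $l_k$ finite). Assumptions: A1: $\nabla f$ is Lipschitz continuous with constant $L>0$. A2: there is $f_{low}\in\mathbb{R}$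 with $f(x)\ge f_{low}$ for all $x\in X$. A3: there are constants $c_1,c_2>0$ with $\langle\nabla f(x_k),d_k\rangle\le -c_1\|\nabla f(x_k)\|^2$ and $\|d_k\|\le c_2\|\nabla f(x_k)\|$ for all $k$. A4: $\lim_{T\to\infty}\frac1T\sum_{k=0}^{T-1}\nu_k=0$. Constant: $\kappa_c=\min\left\{\rho\beta\alpha_0c_1,\ \frac{2\beta\rho(1-\rho)c_1^2}{Lc_2^2}\right\}$. *)

From Stdlib Require Import Reals Lra.
Open Scope R_scope.

Record Hilbert := {
  carrier :> Type;
  vzero : carrier;
  vadd : carrier -> carrier -> carrier;
  vopp : carrier -> carrier;
  vscal : R -> carrier -> carrier;
  inner : carrier -> carrier -> R;
  vadd_assoc : forall u v w, vadd u (vadd v w) = vadd (vadd u v) w;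
  vadd_comm : forall u v, vadd u v = vadd v u;
  vadd_0 : forall u, vadd u vzero = u;
  vadd_opp : forall u, vadd u (vopp u) = vzero;
  vscal_assoc : forall a b u, vscal a (vscal b u) = vscal (a * b) u;
  vscal_1 : forall u, vscal 1 u = u;
  vscal_distr_v : forall a u v, vscal a (vadd u v) = vadd (vscal a u) (vscal a v);
  vscal_distr_s : forall a b u, vscal (a + b) u = vadd (vscal a u) (vscal b u);
  inner_sym : forall u v, inner u v = inner v u;
  inner_add_l : forall u v w, inner (vadd u v) w = inner u w + inner v w;
  inner_scal_l : forall a u v, inner (vscal a u) v = a * inner u v;
  inner_pos : forall u, 0 <= inner u u;
  inner_def : forall u, inner u u = 0 -> u = vzero;
  complete : forall s : nat -> carrier,
    (forall e, e > 0 -> exists N, forall n m, (n >= N)%nat -> (m >= N)%nat ->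
        sqrt (inner (vadd (s n) (vopp (s m))) (vadd (s n) (vopp (s m)))) < e) ->
    exists l, forall e, e > 0 -> exists N, forall n, (n >= N)%nat ->
        sqrt (inner (vadd (s n) (vopp l)) (vadd (s n) (vopp l))) < e
}.

Arguments vzero {h}. Arguments vadd {h}. Arguments vopp {h}.
Arguments vscal {h}. Arguments inner {h}.

Definition vnorm {X : Hilbert} (u : X) : R := sqrt (inner u u).
Definition vsub {X : Hilbert} (u v : X) : X := vadd u (vopp v).

Definition frechet_gradient {X : Hilbert} (f : X -> R) (g : X -> X) : Prop :=
  forall x : X, forall e, e > 0 -> exists delta, delta > 0 /\
    forall h : X, 0 < vnorm h < delta ->
      Rabs (f (vadd x h) - f x - inner (g x) h) <= e * vnorm h.

Fixpoint psum (a : nat -> R) (T : nat) : R :=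
  match T with O => 0 | S n => psum a n + a n end.

Fixpoint minupto (a : nat -> R) (n : nat) : R :=
  match n with O => a O | S m => Rmin (minupto a m) (a (S m)) end.

Definition algorithm1 {X : Hilbert} (f : X -> R) (g : X -> X)
  (x0 : X) (alpha0 beta rho : R)
  (x : nat -> X) (alpha : nat -> R) (d : nat -> X) (l : nat -> nat)
  (nu : nat -> nat -> R) : Prop :=
  0 < alpha0 /\ 0 < beta < 1 /\ 0 < rho < 1 /\
  x O = x0 /\ alpha O = alpha0 /\
  (forall k, inner (g (x k)) (d k) < 0) /\
  (forall k j, 0 <= nu k j) /\
  (forall k,
     f (vadd (x k) (vscal (alpha k * beta ^ l k) (d k)))
       <= f (x k) + rho * (alpha k * beta ^ l k) * inner (g (x k)) (d k) + nu k (l k)) /\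
  (forall k j, (j < l k)%nat ->
     ~ (f (vadd (x k) (vscal (alpha k * beta ^ j) (d k)))
       <= f (x k) + rho * (alpha k * beta ^ j) * inner (g (x k)) (d k) + nu k j)) /\
  (forall k, x (S k) = vadd (x k) (vscal (alpha k * beta ^ l k) (d k))) /\
  (forall k, alpha (S k) = alpha k * powerRZ beta (Z.of_nat (l k) - 1)).

Definition kappa_c (alpha0 beta rho c1 c2 L : R) : R :=
  Rmin (rho * beta * alpha0 * c1) (2 * beta * rho * (1 - rho) * c1 ^ 2 / (L * c2 ^ 2)).

(* Along the line from x_k, the L-smoothness of f gives the descent lemma
   f(x + h) <= f(x) + <grad f(x), h> + L/2 |h|^2.  Hence a trial step that the
   line search rejects must exceed 2(1-rho)c1/(L c2^2); since the next initial
   step is the accepted one divided by beta, all steps alpha_k stay above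
   min(alpha0, 2(1-rho)c1/(L c2^2)), and every iteration decreases f by at least
   kappa_c |grad f(x_k)|^2 - nu_k.  Summing over k < T and bounding f below by
   f_low shows that |grad f(x_k)| > eps for all k < T would force
   T kappa_c eps^2 < 2 (f(x_0) - f_low). *)
From Stdlib Require Import Reals Lra Lia.
Open Scope R_scope.

Section Hilbert_facts.

Context {X : Hilbert}.

Lemma inner_zero_l (h : X) : inner vzero h = 0.
Proof. pose proof (inner_add_l X vzero vzero h) as H. rewrite (vadd_0 X) in H. lra. Qed.

Lemma inner_zero_r (h : X) : inner h vzero = 0.
Proof. rewrite (inner_sym X). apply inner_zero_l. Qed.

Lemma inner_add_r (u v w : X) : inner w (vadd u v) = inner w u + inner w v.
Proof. rewrite !(inner_sym X w). apply inner_add_l. Qed.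

Lemma inner_scal_r a (u v : X) : inner v (vscal a u) = a * inner v u.
Proof. rewrite !(inner_sym X v). apply inner_scal_l. Qed.

Lemma inner_opp_l (u v : X) : inner (vopp u) v = - inner u v.
Proof.
  pose proof (inner_add_l X u (vopp u) v) as H.
  rewrite (vadd_opp X), inner_zero_l in H. lra.
Qed.

Lemma inner_scal2 t (u : X) : inner (vscal t u) (vscal t u) = t * t * inner u u.
Proof. rewrite (inner_scal_l X), inner_scal_r. ring. Qed.

Lemma vscal_0 (u : X) : vscal 0 u = vzero.
Proof.
  assert (Hw : vscal 0 u = vadd (vscal 0 u) (vscal 0 u)).
  { rewrite <- (vscal_distr_s X). f_equal. ring. }
  rewrite <- (vadd_opp X (vscal 0 u)). rewrite Hw at 2.
  rewrite <- (vadd_assoc X), (vadd_opp X), (vadd_0 X). reflexivity.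
Qed.

Lemma vsub_vadd_l (x w : X) : vsub (vadd x w) x = w.
Proof.
  unfold vsub. rewrite (vadd_comm X x w), <- (vadd_assoc X), (vadd_opp X), (vadd_0 X).
  reflexivity.
Qed.

Lemma vnorm_ge0 (u : X) : 0 <= vnorm u.
Proof. apply sqrt_pos. Qed.

Lemma vnorm_sq (u : X) : vnorm u ^ 2 = inner u u.
Proof. unfold vnorm. rewrite pow2_sqrt by apply inner_pos. reflexivity. Qed.

Lemma vnorm_scal t (u : X) : vnorm (vscal t u) = Rabs t * vnorm u.
Proof.
  unfold vnorm. rewrite inner_scal2, sqrt_mult_alt by nra.
  rewrite <- sqrt_Rsqr_abs. reflexivity.
Qed.

Lemma cauchy_schwarz (u v : X) : inner u v <= vnorm u * vnorm v.
Proof.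
  destruct (Req_dec (inner v v) 0) as [Hv0|Hv0].
  { apply (inner_def X) in Hv0. subst v. rewrite inner_zero_r.
    pose proof (vnorm_ge0 u). pose proof (vnorm_ge0 vzero). nra. }
  assert (Hvv : 0 < inner v v) by (pose proof (inner_pos X v); lra).
  set (t := inner u v / inner v v).
  (* expand 0 <= |u - t v|^2 with the minimising t = <u,v>/|v|^2 *)
  pose proof (inner_pos X (vadd u (vscal (- t) v))) as Hpos.
  rewrite (inner_add_l X), !inner_add_r, (inner_scal_l X), !inner_scal_r,
    (inner_scal_l X), (inner_sym X v u) in Hpos.
  assert (Ht : t * inner v v = inner u v) by (unfold t; field; lra).
  assert (Hsq : inner u v * inner u v <= inner u u * inner v v).
  { assert (H2 : 0 <= (inner u u - t * inner u v) * inner v v).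
    { apply Rmult_le_pos; [|lra]. rewrite <- Ht in Hpos |- *. nra. }
    rewrite <- Ht in H2 |- *. nra. }
  apply Rle_trans with (Rabs (inner u v)); [apply Rle_abs|].
  unfold vnorm. rewrite <- sqrt_mult_alt, <- sqrt_Rsqr_abs by apply inner_pos.
  apply sqrt_le_1_alt. exact Hsq.
Qed.

End Hilbert_facts.

Section Smooth_descent.

Variables (X : Hilbert) (f : X -> R) (g : X -> X) (L : R).
Hypothesis Hgrad : frechet_gradient f g.
Hypothesis Hlip : forall u v : X, vnorm (vsub (g u) (g v)) <= L * vnorm (vsub u v).

Lemma derivable_pt_lim_along_line (x h : X) (s : R) : 0 < vnorm h ->
  derivable_pt_lim (fun s => f (vadd x (vscal s h))) s
    (inner (g (vadd x (vscal s h))) h).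
Proof.
  intros Hh e He. set (y := vadd x (vscal s h)). set (N := vnorm h) in *.
  assert (He' : e / (2 * N) > 0) by (apply Rdiv_lt_0_compat; lra).
  destruct (Hgrad y (e / (2 * N)) He') as [delta [Hd Hf]].
  assert (Hpos : 0 < delta / N) by (apply Rdiv_lt_0_compat; lra).
  exists (mkposreal _ Hpos). intros t Ht0 Ht. simpl in Ht.
  assert (Ha : 0 < Rabs t) by (apply Rabs_pos_lt; exact Ht0).
  rewrite (vscal_distr_s X), (vadd_assoc X). fold y.
  assert (Hn : 0 < vnorm (vscal t h) < delta).
  { rewrite vnorm_scal. fold N. split; [apply Rmult_lt_0_compat; lra|].
    apply Rmult_lt_compat_r with (r := N) in Ht; [|lra].
    replace (delta / N * N) with delta in Ht by (field; lra). lra. }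
  specialize (Hf _ Hn). rewrite inner_scal_r, vnorm_scal in Hf. fold N in Hf.
  replace ((f (vadd y (vscal t h)) - f y) / t - inner (g y) h)
    with ((f (vadd y (vscal t h)) - f y - t * inner (g y) h) * / t) by (field; lra).
  rewrite Rabs_mult, Rabs_inv.
  apply Rle_lt_trans with (e / (2 * N) * (Rabs t * N) * / Rabs t).
  - apply Rmult_le_compat_r; [left; apply Rinv_0_lt_compat; lra | exact Hf].
  - replace (e / (2 * N) * (Rabs t * N) * / Rabs t) with (e / 2) by (field; lra). lra.
Qed.

Lemma descent_lemma (x h : X) :
  f (vadd x h) <= f x + inner (g x) h + L / 2 * inner h h.
Proof.
  destruct (Req_dec (inner h h) 0) as [H0|H0].
  { apply (inner_def X) in H0. subst h.
    rewrite (vadd_0 X), inner_zero_r, inner_zero_l. lra. }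
  assert (Hh : 0 < vnorm h) by (apply sqrt_lt_R0; pose proof (inner_pos X h); lra).
  set (a := inner (g x) h). set (N2 := inner h h) in *.
  (* mean value theorem for phi(s) = f(x + s h) - a s - L/2 |h|^2 s^2 on [0, 1] *)
  assert (Hd : forall c, 0 <= c <= 1 -> derivable_pt_lim
    (fun s => f (vadd x (vscal s h)) - a * s - L / 2 * N2 * s ^ 2) c
    (inner (g (vadd x (vscal c h))) h - a * 1 - L / 2 * N2 * (INR 2 * c ^ Nat.pred 2))).
  { intros c _.
    apply (derivable_pt_lim_minus (fun s => f (vadd x (vscal s h)) - a * s)).
    - apply (derivable_pt_lim_minus (fun s => f (vadd x (vscal s h)))).
      + apply derivable_pt_lim_along_line, Hh.
      + exact (derivable_pt_lim_scal id a c 1 (derivable_pt_lim_id c)).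
    - exact (derivable_pt_lim_scal (fun y => y ^ 2) (L / 2 * N2) c _
               (derivable_pt_lim_pow c 2)). }
  destruct (MVT_cor2 _ _ 0 1 Rlt_0_1 Hd) as [c [Hc Hc01]].
  rewrite vscal_0, (vadd_0 X), (vscal_1 X) in Hc.
  assert (Hgap : inner (g (vadd x (vscal c h))) h - a <= L * c * N2).
  { unfold a, Rminus. rewrite <- inner_opp_l, <- (inner_add_l X).
    eapply Rle_trans; [apply cauchy_schwarz|].
    fold (vsub (g (vadd x (vscal c h))) (g x)).
    eapply Rle_trans; [apply Rmult_le_compat_r; [apply vnorm_ge0 | apply Hlip]|].
    rewrite vsub_vadd_l, vnorm_scal, Rabs_right by lra.
    unfold N2. rewrite <- vnorm_sq. lra. }
  replace (INR 2) with 2 in Hc by (simpl; ring). simpl in Hc. nra.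
Qed.

Lemma armijo_failure_step_gt (rho c1 c2 nu s : R) (x d : X) :
  0 < L -> rho < 1 -> 0 < c2 -> 0 < s -> 0 <= nu ->
  inner (g x) d < 0 ->
  inner (g x) d <= - c1 * vnorm (g x) ^ 2 ->
  vnorm d <= c2 * vnorm (g x) ->
  ~ (f (vadd x (vscal s d)) <= f x + rho * s * inner (g x) d + nu) ->
  2 * (1 - rho) * c1 / (L * c2 ^ 2) < s.
Proof.
  intros HL Hrho Hc2 Hs Hnu Hneg Hc1d Hc2d Hfail.
  assert (HLc : 0 < L * c2 ^ 2) by (apply Rmult_lt_0_compat; [lra | apply pow_lt; lra]).
  pose proof (descent_lemma x (vscal s d)) as Hdes.
  rewrite inner_scal_r, inner_scal2 in Hdes.
  set (D := inner (g x) d) in *. set (G := vnorm (g x)) in *.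
  assert (Hdd : inner d d <= c2 ^ 2 * G ^ 2).
  { rewrite <- vnorm_sq. pose proof (vnorm_ge0 d). nra. }
  assert (Hgap : (1 - rho) * (- D) < L / 2 * s * inner d d).
  { apply Rmult_lt_reg_l with s; [exact Hs|]. nra. }
  assert (HG : 0 < G ^ 2).
  { destruct (vnorm_ge0 (g x)) as [Hpos|Hzero]; [apply pow_lt; exact Hpos|].
    exfalso. fold G in Hzero. rewrite <- Hzero in Hdd.
    replace (c2 ^ 2 * 0 ^ 2) with 0 in Hdd by ring.
    assert (Hd0 : inner d d = 0) by (pose proof (inner_pos X d); lra).
    rewrite Hd0 in Hgap. nra. }
  assert (Hkey : (1 - rho) * c1 * G ^ 2 < L / 2 * s * c2 ^ 2 * G ^ 2).
  { assert ((1 - rho) * (c1 * G ^ 2) <= (1 - rho) * (- D))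
      by (apply Rmult_le_compat_l; lra).
    assert (L / 2 * s * inner d d <= L / 2 * s * (c2 ^ 2 * G ^ 2))
      by (apply Rmult_le_compat_l; [apply Rmult_le_pos|]; lra).
    lra. }
  apply Rmult_lt_reg_r with (L * c2 ^ 2 * G ^ 2); [apply Rmult_lt_0_compat; lra|].
  replace (2 * (1 - rho) * c1 / (L * c2 ^ 2) * (L * c2 ^ 2 * G ^ 2))
    with (2 * ((1 - rho) * c1 * G ^ 2)) by (field; lra).
  lra.
Qed.

End Smooth_descent.

Lemma kappa_c_factor (alpha0 beta rho c1 c2 L : R) :
  0 < rho * beta * c1 -> L <> 0 -> c2 <> 0 ->
  kappa_c alpha0 beta rho c1 c2 L
  = rho * beta * c1 * Rmin alpha0 (2 * (1 - rho) * c1 / (L * c2 ^ 2)).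
Proof.
  intros Hp HL Hc2. unfold kappa_c.
  replace (2 * beta * rho * (1 - rho) * c1 ^ 2 / (L * c2 ^ 2))
    with (rho * beta * c1 * (2 * (1 - rho) * c1 / (L * c2 ^ 2))) by (field; auto).
  unfold Rmin. destruct (Rle_dec alpha0 _), (Rle_dec (rho * beta * alpha0 * c1) _);
    nra.
Qed.

Lemma kappa_c_pos (alpha0 beta rho c1 c2 L : R) :
  0 < alpha0 -> 0 < beta -> 0 < rho < 1 -> 0 < c1 -> 0 < c2 -> 0 < L ->
  0 < kappa_c alpha0 beta rho c1 c2 L.
Proof.
  intros. assert (0 < L * c2 ^ 2) by (apply Rmult_lt_0_compat; [lra | apply pow_lt; lra]).
  rewrite kappa_c_factor by (try apply Rmult_lt_0_compat; try apply Rmult_lt_0_compat; lra).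
  apply Rmult_lt_0_compat; [apply Rmult_lt_0_compat; [apply Rmult_lt_0_compat|]; lra|].
  apply Rmin_glb_lt; [lra|]. apply Rdiv_lt_0_compat; nra.
Qed.

Lemma psum_telescope (a b c : nat -> R) (n : nat) :
  (forall k, a (S k) <= a k - b k + c k) -> a n <= a O - psum b n + psum c n.
Proof.
  intros Hstep. induction n as [|n IH]; simpl; [lra|]. specialize (Hstep n). lra.
Qed.

Lemma psum_gt (a : nat -> R) (c : R) (T : nat) :
  (1 <= T)%nat -> (forall k, (k < T)%nat -> c < a k) -> INR T * c < psum a T.
Proof.
  induction T as [|[|T] IH]; intros HT Ha; [lia| |].
  - simpl. specialize (Ha O ltac:(lia)). lra.
  - rewrite S_INR. change (psum a (S (S T))) with (psum a (S T) + a (S T)).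
    specialize (IH ltac:(lia) (fun k Hk => Ha k ltac:(lia))).
    specialize (Ha (S T) ltac:(lia)). lra.
Qed.

Lemma minupto_le (a : nat -> R) (n k : nat) : (k <= n)%nat -> minupto a n <= a k.
Proof.
  induction n as [|n IH]; intros Hk; simpl.
  - replace k with O by lia. lra.
  - destruct (Nat.eq_dec k (S n)) as [->|Hne]; [apply Rmin_r|].
    eapply Rle_trans; [apply Rmin_l | apply IH; lia].
Qed.

Section Line_search.

Variables (X : Hilbert) (f : X -> R) (g : X -> X) (L : R).
Hypothesis Hgrad : frechet_gradient f g.
Hypothesis Hlip : forall u v : X, vnorm (vsub (g u) (g v)) <= L * vnorm (vsub u v).
Hypothesis HL : 0 < L.

Variables (alpha0 beta rho c1 c2 : R) (x : nat -> X) (alpha : nat -> R)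
  (d : nat -> X) (l : nat -> nat) (nu : nat -> nat -> R).
Hypotheses (Halpha0 : 0 < alpha0) (Hbeta : 0 < beta < 1) (Hrho : 0 < rho < 1)
  (Hc1 : 0 < c1) (Hc2 : 0 < c2).
Hypothesis Halpha_init : alpha O = alpha0.
Hypothesis Hdir : forall k, inner (g (x k)) (d k) < 0.
Hypothesis Hnu : forall k j, 0 <= nu k j.
Hypothesis Haccept : forall k,
  f (vadd (x k) (vscal (alpha k * beta ^ l k) (d k)))
    <= f (x k) + rho * (alpha k * beta ^ l k) * inner (g (x k)) (d k) + nu k (l k).
Hypothesis Hreject : forall k j, (j < l k)%nat ->
  ~ (f (vadd (x k) (vscal (alpha k * beta ^ j) (d k)))
      <= f (x k) + rho * (alpha k * beta ^ j) * inner (g (x k)) (d k) + nu k j).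
Hypothesis Hx_next : forall k, x (S k) = vadd (x k) (vscal (alpha k * beta ^ l k) (d k)).
Hypothesis Halpha_next : forall k, alpha (S k) = alpha k * powerRZ beta (Z.of_nat (l k) - 1).
Hypothesis Hangle : forall k, inner (g (x k)) (d k) <= - c1 * vnorm (g (x k)) ^ 2.
Hypothesis Hdir_bound : forall k, vnorm (d k) <= c2 * vnorm (g (x k)).

Let alpha_min := Rmin alpha0 (2 * (1 - rho) * c1 / (L * c2 ^ 2)).

Lemma alpha_min_pos : 0 < alpha_min.
Proof.
  apply Rmin_glb_lt; [exact Halpha0|].
  apply Rdiv_lt_0_compat; [nra|]. apply Rmult_lt_0_compat; [lra | apply pow_lt; lra].
Qed.

Lemma accepted_step_ge k : alpha_min <= alpha k -> beta * alpha_min <= alpha k * beta ^ l k.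
Proof.
  intros Hk. pose proof alpha_min_pos.
  destruct (l k) as [|j] eqn:Elk; [simpl; nra|].
  assert (Hs : 0 < alpha k * beta ^ j) by (apply Rmult_lt_0_compat; [lra | apply pow_lt; lra]).
  assert (Hrej : alpha_min < alpha k * beta ^ j).
  { eapply Rle_lt_trans; [apply Rmin_r|].
    apply (armijo_failure_step_gt X f g L Hgrad Hlip rho c1 c2 (nu k j) _ (x k) (d k));
      try lra; auto.
    apply Hreject. lia. }
  replace (alpha k * beta ^ S j) with (beta * (alpha k * beta ^ j)) by (simpl; ring).
  apply Rmult_le_compat_l; lra.
Qed.

Lemma alpha_ge_min k : alpha_min <= alpha k.
Proof.
  induction k as [|k IH].
  { rewrite Halpha_init. apply Rmin_l. }
  pose proof (accepted_step_ge k IH) as Hstep.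
  assert (E : alpha k * beta ^ l k = beta * alpha (S k)).
  { rewrite Halpha_next, pow_powerRZ.
    replace (Z.of_nat (l k)) with ((Z.of_nat (l k) - 1) + 1)%Z at 1 by ring.
    rewrite powerRZ_add by lra. simpl. ring. }
  rewrite E in Hstep. apply Rmult_le_reg_l with beta; lra.
Qed.

Lemma sufficient_decrease k :
  f (x (S k)) <= f (x k) - kappa_c alpha0 beta rho c1 c2 L * vnorm (g (x k)) ^ 2
                 + nu k (l k).
Proof.
  rewrite Hx_next, kappa_c_factor.
  2: { apply Rmult_lt_0_compat; [apply Rmult_lt_0_compat|]; lra. }
  2, 3: lra.
  fold alpha_min. eapply Rle_trans; [apply Haccept|].
  pose proof (accepted_step_ge k (alpha_ge_min k)) as Hstep.
  pose proof (Hangle k). pose proof alpha_min_pos.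
  assert (HG : 0 <= vnorm (g (x k)) ^ 2) by apply pow2_ge_0.
  set (t := alpha k * beta ^ l k) in *. set (G2 := vnorm (g (x k)) ^ 2) in *.
  assert (rho * t * inner (g (x k)) (d k) <= rho * t * (- c1 * G2)).
  { apply Rmult_le_compat_l; [|assumption]. apply Rmult_le_pos; nra. }
  assert (rho * c1 * G2 * (beta * alpha_min) <= rho * c1 * G2 * t).
  { apply Rmult_le_compat_l; [|assumption]. apply Rmult_le_pos; [apply Rmult_le_pos|]; lra. }
  lra.
Qed.

End Line_search.

Theorem theorem2 (X : Hilbert) (f : X -> R) (g : X -> X)
  (x0 : X) (alpha0 beta rho : R)
  (x : nat -> X) (alpha : nat -> R) (d : nat -> X) (l : nat -> nat)
  (nu : nat -> nat -> R)
  (L flow c1 c2 : R)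
  (Hdiff : frechet_gradient f g)
  (Halg : algorithm1 f g x0 alpha0 beta rho x alpha d l nu)
  (* A1 *)
  (HL : 0 < L)
  (HA1 : forall u v : X, vnorm (vsub (g u) (g v)) <= L * vnorm (vsub u v))
  (* A2 *)
  (HA2 : forall u : X, flow <= f u)
  (* A3 *)
  (Hc1 : 0 < c1) (Hc2 : 0 < c2)
  (HA3a : forall k, inner (g (x k)) (d k) <= - c1 * vnorm (g (x k)) ^ 2)
  (HA3b : forall k, vnorm (d k) <= c2 * vnorm (g (x k)))
  (* A4 : (1/T) sum_{k<T} nu_k -> 0, indexed by T = n+1 *)
  (HA4 : Un_cv (fun n => psum (fun k => nu k (l k)) (S n) / INR (S n)) 0)
  (eps : R) (Heps : 0 < eps) (T0 : nat)
  (HT0 : forall T : nat, (T0 <= T)%nat -> (1 <= T)%nat ->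
     psum (fun k => nu k (l k)) T / INR T
       <= kappa_c alpha0 beta rho c1 c2 L * eps ^ 2 / 2)
  (T : nat) (HT1 : (1 <= T)%nat) (HTT0 : (T0 <= T)%nat)
  (HT : 2 * (f x0 - flow) / (kappa_c alpha0 beta rho c1 c2 L * eps ^ 2) <= INR T) :
  minupto (fun k => vnorm (g (x k))) (T - 1) <= eps.
Proof.
  destruct Halg as [Ha0 [Hb [Hr [Hx0 [Hal0 [Hdir [Hnu [Hacc [Hrej [Hxs Has]]]]]]]]]].
  set (K := kappa_c alpha0 beta rho c1 c2 L) in *.
  assert (HK : 0 < K) by (apply kappa_c_pos; lra).
  assert (HTpos : 0 < INR T) by (apply lt_0_INR; lia).
  assert (HKe : 0 < K * eps ^ 2) by (apply Rmult_lt_0_compat; [lra | apply pow_lt; lra]).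
  pose proof (psum_telescope (fun k => f (x k)) (fun k => K * vnorm (g (x k)) ^ 2)
    (fun k => nu k (l k)) T
    (sufficient_decrease X f g L Hdiff HA1 HL alpha0 beta rho c1 c2 x alpha d l nu
       Ha0 Hb Hr Hc1 Hc2 Hal0 Hdir Hnu Hacc Hrej Hxs Has HA3a HA3b)) as Hval.
  cbv beta in Hval. rewrite Hx0 in Hval. pose proof (HA2 (x T)) as Hlow.
  assert (Hnv : psum (fun k => nu k (l k)) T <= INR T * (K * eps ^ 2 / 2)).
  { specialize (HT0 T HTT0 HT1). apply Rmult_le_compat_l with (r := INR T) in HT0; [|lra].
    unfold Rdiv at 1 in HT0. rewrite <- Rmult_assoc, Rmult_comm, <- Rmult_assoc,
      Rinv_l, Rmult_1_l in HT0 by lra. exact HT0. }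
  assert (HTK : 2 * (f x0 - flow) <= INR T * (K * eps ^ 2)).
  { apply Rmult_le_compat_r with (r := K * eps ^ 2) in HT; [|lra].
    unfold Rdiv in HT. rewrite Rmult_assoc, Rinv_l, Rmult_1_r in HT by lra. exact HT. }
  apply Rnot_lt_le. intros Hlt.
  assert (Hsum : INR T * (K * eps ^ 2) < psum (fun k => K * vnorm (g (x k)) ^ 2) T).
  { apply psum_gt; [exact HT1|]. intros k Hk.
    pose proof (minupto_le (fun k => vnorm (g (x k))) (T - 1) k ltac:(lia)).
    apply Rmult_lt_compat_l; [exact HK|]. simpl. nra. }
  lra.
Qed.
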